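(* Let $q$ be even, $G=\mathrm{SO}_{2m+1}(q)\cong\mathrm{Sp}_{2m}(q)$ acting on $V$ with nonsingular quadratic form $Q$, and let $g\in G$ be semisimple with $\dim C_V(g)\geq 2$. Then $g$ stabilizes a nondegenerate hyperplane of plus type and a nondegenerate hyperplane of minus type.
   Context: $V$ is a $(2m+1)$-dimensional $\mathbb F_q$-space and $Q$ is nonsingular, i.e. no nonzero vector of the radical $V^\perp$ of the associated bilinear form is singular; $V^\perp$ is $1$-dimensional and $G$ (the isometry group of $Q$) acts trivially on it. A nondegenerate hyperplane is a complement $W$ of $V^\perp$; $Q|_W$ is then nondegenerate and $W$ has a type (plus or minus, according to its Witt index). Stabilizers of nondegenerate hyperplanes of type $\pm$ correspond to the subgroups $\mathrm{SO}^{\pm}_{2m}(q)<\mathrm{Sp}_{2m}(q)$. *)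

From HB Require Import structures.
From mathcomp Require Import all_boot all_order all_algebra all_field.
Set Implicit Arguments. Unset Strict Implicit. Unset Printing Implicit Defensive.
Import Order.TTheory GRing.Theory Num.Theory.
Local Open Scope ring_scope.

(* Vectors are row vectors 'rV[F]_n, matrices act on the right (v *m g).
   Subspaces of F^n are represented as row spaces of square matrices. *)

Section QuadForms.
Variables (F : finFieldType) (n : nat).

Definition qform (A : 'M[F]_n) (v : 'rV[F]_n) : F := (v *m A *m v^T) 0 0.

(* matrix of the polar (associated bilinear) form b(u,v)=Q(u+v)-Q(u)-Q(v) *)
Definition polar_mx (A : 'M[F]_n) : 'M[F]_n := A + A^T.

Definition radical (A : 'M[F]_n) : 'M[F]_n := kermx (polar_mx A).

Definition nonsingular_qf (A : 'M[F]_n) : Prop :=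
  forall v : 'rV[F]_n, (v <= radical A)%MS -> qform A v = 0 -> v = 0.

Definition isometry_qf (A : 'M[F]_n) (g : 'M[F]_n) : Prop :=
  g \in unitmx /\ forall v : 'rV[F]_n, qform A (v *m g) = qform A v.

Definition fixed_space (g : 'M[F]_n) : 'M[F]_n := kermx (g - 1%:M).

Definition totally_singular (A : 'M[F]_n) (U : 'M[F]_n) : bool :=
  [forall v : 'rV[F]_n, (v <= U)%MS ==> (qform A v == 0)].

Definition witt_index (A : 'M[F]_n) (W : 'M[F]_n) : nat :=
  \max_(U : 'M[F]_n | (U <= W)%MS && totally_singular A U) \rank U.

(* nondegenerate hyperplane: a complement of the radical V^perp *)
Definition nondeg_hyperplane (A : 'M[F]_n) (W : 'M[F]_n) : Prop :=
  (W :&: radical A == (0 : 'M[F]_n))%MS /\ (W + radical A == 1%:M)%MS.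

End QuadForms.

(* semisimple element of GL_n over the (perfect) finite field F:
   its minimal polynomial is separable *)
Definition semisimple_mx (F : finFieldType) (n : nat) (g : 'M[F]_n.+1) : bool :=
  separable.separable_poly (mxminpoly g).

(* When n = 2m+1 and Q is
   nonsingular, the radical of b is a line <r> with Q(r) <> 0, fixed by g.
   Semisimplicity splits V = C (+) D into the fixed space C = ker(g - 1) and
   the image D = Im(g - 1); these are b-orthogonal, D is nondegenerate and the
   radical of b on C is <r>.  For every complement X of <r> in C, the space
   X + D is a g-stable nondegenerate hyperplane, so it suffices to choose X
   such that X + D has Witt index m (plus type) or m - 1 (minus type).
   This choice is made by induction: hyperbolic pairs are split off C (while
   dim C >= 5) and off D (while dim D >= 4), each raising the Witt index by
   one; in the remaining case dim C = 3, dim D <= 2, the plane X can be taken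
   with prescribed values of Q on a symplectic basis, because adding a
   multiple of r to a vector changes Q by an arbitrary square, and every
   element of F is a square.  Choosing X hyperbolic, anisotropic or a
   "mirror image" of D then realises both Witt indices. *)

From HB Require Import structures.
From mathcomp Require Import all_boot all_order all_algebra all_field.
From mathcomp Require Import ring zify.
From Stdlib Require Import Lia.
Import GRing.Theory.
Local Open Scope ring_scope.
Set Implicit Arguments. Unset Strict Implicit. Unset Printing Implicit Defensive.

Section RowSpaces.
Variables (F : fieldType) (n : nat).
Implicit Types (v x : 'rV[F]_n).

Lemma mxrank_adds_notsub k (M : 'M[F]_(k, n)) v :
  ~~ (v <= M)%MS -> \rank (M + v)%MS = (\rank M).+1.
Proof.
move=> nvM; have v0 : v != 0 by apply: contraNneq nvM => ->; rewrite sub0mx.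
have capv0 : \rank (M :&: v)%MS = 0%N.
  apply/eqP; apply: contraNT nvM; rewrite -lt0n => cap_gt0.
  suff vMv : (v <= M :&: v)%MS by rewrite sub_capmx in vMv; case/andP: vMv.
  have le1 := mxrankS (capmxSr M v); rewrite rank_rV v0 in le1.
  rewrite -(mxrank_leqif_sup (capmxSr M v)) rank_rV v0; apply/eqP; lia.
have := mxrank_sum_cap M v; rewrite capv0 rank_rV v0; lia.
Qed.

Lemma sub_adds_rowP k (M : 'M[F]_(k, n)) x v :
  (x <= M + v)%MS -> exists a, exists c : F, (a <= M)%MS /\ x = a + c *: v.
Proof.
case/sub_addsmxP=> u ->; exists (u.1 *m M), (u.2 0 0); split; first exact: submxMl.
by rewrite {1}[u.2]mx11_scalar mul_scalar_mx.
Qed.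

Lemma sub_adds2_rowP k (M : 'M[F]_(k, n)) e f x : (x <= M + e + f)%MS ->
  exists a, exists al : F, exists be : F, (a <= M)%MS /\ x = a + al *: e + be *: f.
Proof.
case/sub_adds_rowP=> y [be [yS ->]]; case/sub_adds_rowP: yS => a [al [aM ->]].
by exists a, al, be.
Qed.

Lemma sub_plane_rowP e f x :
  (x <= e + f)%MS -> exists al : F, exists be : F, x = al *: e + be *: f.
Proof. by case/sub_adds_rowP=> a [be [/sub_rVP[al ->] ->]]; exists al, be. Qed.

Lemma row_notsub k l (M : 'M[F]_(k, n)) (N : 'M[F]_(l, n)) :
  ~~ (M <= N)%MS -> exists v : 'rV[F]_n, (v <= M)%MS /\ ~~ (v <= N)%MS.
Proof. by case/row_subPn=> i Hi; exists (row i M); rewrite row_sub. Qed.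

Lemma row_neq0 k (M : 'M[F]_(k, n)) :
  (0 < \rank M)%N -> exists v : 'rV[F]_n, (v <= M)%MS /\ v != 0.
Proof.
rewrite lt0n mxrank_eq0 -submx0 => /row_notsub[v [vM]].
by rewrite submx0; exists v.
Qed.

Lemma mxrank_cap_ker k (S : 'M[F]_(k, n)) (c : 'cV[F]_n) :
  (\rank S <= (\rank (S :&: kermx c)%MS).+1)%N.
Proof.
have := mxrank_sum_cap S (kermx c); rewrite mxrank_ker.
have := rank_leq_col (S + kermx c)%MS; have := rank_leq_col c; lia.
Qed.

Lemma submx_addsl k1 k2 k3 (x : 'M[F]_(k1, n)) (P : 'M_(k2, n)) (R : 'M_(k3, n)) :
  (x <= P)%MS -> (x <= P + R)%MS.
Proof. by move=> h; apply: submx_trans h (addsmxSl P R). Qed.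

Lemma submx_addsr k1 k2 k3 (x : 'M[F]_(k1, n)) (P : 'M_(k2, n)) (R : 'M_(k3, n)) :
  (x <= R)%MS -> (x <= P + R)%MS.
Proof. by move=> h; apply: submx_trans h (addsmxSr P R). Qed.

End RowSpaces.

Ltac sub_sums := match goal with
 | |- is_true (?x <= ?x)%MS => exact: (submx_refl x)
 | |- is_true (0 <= _)%MS => exact: sub0mx
 | |- is_true (addsmx ?P ?R <= ?M)%MS =>
     rewrite addsmx_sub; apply/andP; split; sub_sums
 | |- is_true (?x <= addsmx ?P ?R)%MS =>
     first [ apply: submx_addsl; sub_sums | apply: submx_addsr; sub_sums ]
 | H : is_true (?x <= ?y)%MS |- is_true (?x <= ?y)%MS => exact H
end.

Section FiniteChar2.
Variable F : finFieldType.
Hypothesis char2 : 2%N \in [pchar F].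

(* Squaring is the Frobenius automorphism, hence bijective. *)
Lemma sqr_inj_pchar2 : injective (fun x : F => x ^+ 2).
Proof. exact: fmorph_inj (pFrobenius_aut char2). Qed.

Lemma sqrt_pchar2 (a : F) : exists z : F, z ^+ 2 = a.
Proof. by exists (invF sqr_inj_pchar2 a); rewrite (f_invF sqr_inj_pchar2). Qed.

(* The Artin-Schreier map t |-> t^2 + t takes the same value at 0 and 1, so
   on the finite field F it is not surjective. *)
Lemma artin_schreier_nonsurj : exists c : F, forall t : F, t ^+ 2 + t != c.
Proof.
have [|surj] := boolP [exists c : F, [forall t : F, t ^+ 2 + t != c]].
  by case/existsP=> c /forallP; exists c.
move/existsPn: surj => surj.
pose h c := odflt 0 [pick t : F | t ^+ 2 + t == c].
have hK c : (h c) ^+ 2 + h c = c.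
  rewrite /h; case: pickP => [t /eqP //|none].
  by have /forallPn[t] := surj c; rewrite none.
have h_inj : injective h by move=> c1 c2 E; rewrite -(hK c1) -(hK c2) E.
have hKi z : h (z ^+ 2 + z) = z.
  by have e := f_invF h_inj z; rewrite -{1 2}e hK.
have : h (0 ^+ 2 + 0) = h (1 ^+ 2 + 1) by rewrite expr1n addrr_pchar2 // expr0n add0r.
by rewrite !hKi => /eqP; rewrite eq_sym oner_eq0.
Qed.

End FiniteChar2.

Section PolarForm.
Variables (F : finFieldType) (n : nat) (A : 'M[F]_n).
Hypothesis char2 : 2%N \in [pchar F].
Local Notation Q := (qform A).

Definition bf (u v : 'rV[F]_n) : F := (u *m polar_mx A *m v^T) 0 0.

Definition perp (x : 'rV[F]_n) : 'M[F]_n := kermx (polar_mx A *m x^T).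

Lemma tr_mx11 (M : 'M[F]_1) : M^T = M.
Proof. by rewrite [M]mx11_scalar tr_scalar_mx. Qed.

Lemma qformD u v : Q (u + v) = Q u + Q v + bf u v.
Proof.
rewrite /qform /bf /polar_mx linearD /= mulmxDr !mulmxDl mulmxDr mulmxDl.
have -> : v *m A *m u^T = u *m A^T *m v^T.
  by rewrite -[LHS]tr_mx11 !trmx_mul trmxK mulmxA.
by rewrite !mxE; ring.
Qed.

Lemma qformZ c u : Q (c *: u) = c ^+ 2 * Q u.
Proof. by rewrite /qform linearZ /= -scalemxAr -!scalemxAl !mxE mulrA expr2. Qed.

Lemma qform0 : Q 0 = 0.
Proof. by rewrite /qform !mul0mx mxE. Qed.

Lemma bfDl u v w : bf (u + v) w = bf u w + bf v w.
Proof. by rewrite /bf !mulmxDl mxE. Qed.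

Lemma bfDr u v w : bf u (v + w) = bf u v + bf u w.
Proof. by rewrite /bf [(v + w)^T]linearD /= mulmxDr mxE. Qed.

Lemma bfZl c u w : bf (c *: u) w = c * bf u w.
Proof. by rewrite /bf -!scalemxAl mxE. Qed.

Lemma bfZr c u w : bf u (c *: w) = c * bf u w.
Proof. by rewrite /bf [(c *: w)^T]linearZ /= -scalemxAr mxE. Qed.

Lemma bfC u v : bf u v = bf v u.
Proof.
rewrite /bf -[u *m _ *m _]tr_mx11 !trmx_mul trmxK mulmxA.
by rewrite /polar_mx linearD /= trmxK addrC.
Qed.

Lemma bf0l u : bf 0 u = 0. Proof. by rewrite /bf !mul0mx mxE. Qed.

Lemma bfBl u v w : bf (u - v) w = bf u w - bf v w.
Proof. by rewrite bfDl -scaleN1r bfZl mulN1r. Qed.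

Lemma bfxx u : bf u u = 0.
Proof.
have := qformD u u; rewrite -mulr2n -scaler_nat (pcharf0 char2) scale0r qform0.
by rewrite addrr_pchar2 // add0r => <-.
Qed.

Lemma perpP v x : reflect (bf v x = 0) (v <= perp x)%MS.
Proof.
apply: (iffP sub_kermxP) => [H|H]; first by rewrite /bf -mulmxA H mxE.
by rewrite mulmxA (mx11_scalar (_ *m _)) -/(bf v x) H raddf0.
Qed.

Lemma radicalP v : reflect (forall w, bf v w = 0) (v <= radical A)%MS.
Proof.
apply: (iffP sub_kermxP) => [H w|H]; first by rewrite /bf H mul0mx mxE.
apply/matrixP => i j; rewrite (ord1 i) [RHS]mxE.
by have := H (delta_mx 0 j); rewrite /bf trmx_delta -colE mxE.
Qed.

Lemma bf_adds2_eq0 k (S' : 'M[F]_(k, n)) e f v : bf v e = 0 -> bf v f = 0 ->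
  (forall w, (w <= S')%MS -> bf v w = 0) ->
  forall w : 'rV_n, (w <= S' + e + f)%MS -> bf v w = 0.
Proof.
move=> ve vf H w /sub_adds2_rowP[a [al [be [aS ->]]]].
by rewrite !bfDr !bfZr ve vf H // !mulr0 !addr0.
Qed.

(* If Q(u) <> 0 and b(u, v) = 0, some l u + v is singular, since
   Q(l u + v) = l^2 Q(u) + Q(v) and every element of F is a square. *)
Lemma singular_comb u v : Q u != 0 -> bf u v = 0 ->
  exists l : F, Q (l *: u + v) = 0.
Proof.
move=> Qu buv; have [l hl] := sqrt_pchar2 char2 (Q v / Q u).
by exists l; rewrite qformD qformZ hl divfK // bfZl buv mulr0 addr0 addrr_pchar2.
Qed.

End PolarForm.

Section WittIndex.
Variables (F : finFieldType) (n : nat) (A : 'M[F]_n).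
Hypothesis char2 : 2%N \in [pchar F].
Local Notation Q := (qform A).
Local Notation bf := (bf A).
Implicit Types (v w e f : 'rV[F]_n) (U W : 'M[F]_n).

Lemma totally_singularP U :
  reflect (forall v, (v <= U)%MS -> Q v = 0) (totally_singular A U).
Proof.
apply: (iffP forallP) => [H v vU|H v]; first by apply/eqP; have := H v; rewrite vU.
by apply/implyP => /H ->.
Qed.

Lemma totally_singularS U U' :
  (U' <= U)%MS -> totally_singular A U -> totally_singular A U'.
Proof.
move=> U'U /totally_singularP tsU; apply/totally_singularP => v vU'.
exact: tsU (submx_trans vU' U'U).
Qed.

Lemma bf_totally_singular U u w : totally_singular A U ->
  (u <= U)%MS -> (w <= U)%MS -> bf u w = 0.
Proof.
move=> /totally_singularP tsU uU wU; have := qformD A u w.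
by rewrite tsU ?addmx_sub // tsU // tsU // !add0r.
Qed.

Lemma totally_singular_adds U e : totally_singular A U -> Q e = 0 ->
  (forall u, (u <= U)%MS -> bf u e = 0) -> totally_singular A (U + e)%MS.
Proof.
move=> /totally_singularP tsU Qe Ue; apply/totally_singularP.
move=> v /sub_adds_rowP[a [c [aU ->]]].
by rewrite qformD qformZ Qe tsU // bfZr Ue // !mulr0 !addr0.
Qed.

Lemma witt_index_ge U W : (U <= W)%MS -> totally_singular A U ->
  (\rank U <= witt_index A W)%N.
Proof. by move=> UW tsU; apply: (leq_bigmax_cond U) => /=; rewrite UW tsU. Qed.

Lemma witt_index_leP W k :
  (forall U, (U <= W)%MS -> totally_singular A U -> \rank U <= k)%N ->
  (witt_index A W <= k)%N.
Proof. by move=> H; apply/bigmax_leqP => U /andP[UW tsU]; apply: H. Qed.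

Lemma witt_index_max W : exists U,
  [/\ (U <= W)%MS, totally_singular A U & \rank U = witt_index A W].
Proof.
set P := [pred U : 'M[F]_n | (U <= W)%MS && totally_singular A U].
have P0 : (0 < #|P|)%N.
  apply/card_gt0P; exists 0; rewrite inE sub0mx /=; apply/totally_singularP => v.
  by rewrite submx0 => /eqP ->; rewrite qform0.
have [U PU maxU] := @eq_bigmax_cond _ P (fun U => \rank U) P0.
by move: PU; rewrite inE => /andP[UW tsU]; exists U; split; rewrite // /witt_index maxU.
Qed.

Lemma witt_index_anisotropic W :
  (forall v, (v <= W)%MS -> Q v = 0 -> v = 0) -> witt_index A W = 0%N.
Proof.
move=> anisoW; apply/eqP; rewrite -leqn0; apply: witt_index_leP => U UW tsU.
rewrite leqn0 mxrank_eq0 -submx0; apply/row_subP => i; rewrite submx0; apply/eqP.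
apply: anisoW; first exact: submx_trans (row_sub i U) UW.
by move/totally_singularP: tsU; apply; apply: row_sub.
Qed.

Lemma witt_index0 : witt_index A (0 : 'M_n) = 0%N.
Proof. by apply: witt_index_anisotropic => v; rewrite submx0 => /eqP. Qed.

(* If U is totally singular in W' + <e> + <f>, then Z = (U :&: e^perp) + <e>
   is totally singular, at least as large as U, and contained in
   (Z :&: W') + <e>; hence W' + <e> + <f> has Witt index at most
   witt_index W' + 1. *)
Lemma witt_index_hyperbolic_le W' e f : Q e = 0 -> bf e f = 1 ->
  (forall w, (w <= W')%MS -> bf w e = 0 /\ bf w f = 0) ->
  (witt_index A (W' + e + f)%MS <= (witt_index A W').+1)%N.
Proof.
move=> Qe bef orth; apply: witt_index_leP => U UW tsU.
set Z := ((U :&: perp A e) + e)%MS.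
have tsZ : totally_singular A Z.
  apply: totally_singular_adds => //; first exact: totally_singularS (capmxSl _ _) tsU.
  by move=> u; rewrite sub_capmx => /andP[_ /perpP].
have rUZ : (\rank U <= \rank Z)%N.
  have [eU|eU] := boolP (e <= U)%MS.
    have UUe : (U <= U :&: perp A e)%MS.
      rewrite sub_capmx submx_refl /=; apply/row_subP => i; apply/perpP.
      exact: bf_totally_singular tsU (row_sub i U) eU.
    exact: leq_trans (mxrankS UUe) (mxrankS (addsmxSl _ _)).
  rewrite /Z mxrank_adds_notsub; first exact: mxrank_cap_ker.
  by apply: contra eU; rewrite sub_capmx => /andP[].
have ZW' : (Z <= (Z :&: W') + e)%MS.
  apply/row_subP => i; set z := row i Z.
  have /sub_adds_rowP[a [c [aUe ->]]] : (z <= Z)%MS := row_sub i Z.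
  have /andP[aU /perpP ae] : (a <= U)%MS && (a <= perp A e)%MS by rewrite -sub_capmx.
  have /sub_adds2_rowP[w [al [be [wW' Ea]]]] := submx_trans aU UW.
  have be0 : be = 0.
    move: ae; rewrite Ea !bfDl !bfZl bfxx // (bfC A f e) bef.
    by case: (orth _ wW') => -> _; rewrite mulr0 !add0r mulr1.
  rewrite Ea be0 scale0r addr0 -addrA -scalerDl; apply: addmx_sub_adds.
    rewrite sub_capmx wW' andbT (_ : w = a - al *: e).
      by rewrite addmx_sub ?eqmx_opp ?scalemx_sub // /Z ?addsmxSr // submx_addsl.
    by rewrite Ea be0 scale0r addr0 addrK.
  by rewrite scalemx_sub.
apply: leq_trans rUZ (leq_trans (mxrankS ZW') (leq_trans (mxrank_adds_leqif _ _) _)).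
have : (\rank (Z :&: W')%MS <= witt_index A W')%N.
  by apply: witt_index_ge; [exact: capmxSr | exact: totally_singularS (capmxSl _ _) tsZ].
by rewrite rank_rV; case: (e != 0) => /=; lia.
Qed.

Lemma witt_index_hyperbolic W W' e f : Q e = 0 -> Q f = 0 -> bf e f = 1 ->
  (forall w, (w <= W')%MS -> bf w e = 0 /\ bf w f = 0) ->
  (W == W' + e + f)%MS -> witt_index A W = (witt_index A W').+1.
Proof.
move=> Qe Qf bef orth /eqmxP defW.
have witt_eq : witt_index A W = witt_index A (W' + e + f)%MS.
  by apply/eqP; rewrite eqn_leq !witt_index_leP // => U UW tsU;
     apply: witt_index_ge tsU; rewrite ?defW // -defW.
rewrite witt_eq; apply/eqP; rewrite eqn_leq witt_index_hyperbolic_le //=.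
have eW' : ~~ (e <= W')%MS.
  by apply/negP => /orth[_]; rewrite bef; apply/eqP; exact: oner_neq0.
have [U [UW' tsU <-]] := witt_index_max W'.
have eU : ~~ (e <= U)%MS by apply: contra eW' => eU; exact: submx_trans eU UW'.
rewrite -(mxrank_adds_notsub eU); apply: witt_index_ge.
  by rewrite addsmx_sub; apply/andP; split; [apply: submx_addsl|]; sub_sums.
by apply: totally_singular_adds => // u uU; case: (orth u (submx_trans uU UW')).
Qed.

End WittIndex.

Section HyperbolicPairs.
Variables (F : finFieldType) (n : nat) (A : 'M[F]_n).
Hypothesis char2 : 2%N \in [pchar F].
Local Notation Q := (qform A).
Local Notation bf := (bf A).
Implicit Types (v w x e f : 'rV[F]_n) (S : 'M[F]_n).

Definition nondeg_sub S := forall v, (v <= S)%MS ->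
  (forall w, (w <= S)%MS -> bf v w = 0) -> v = 0.

Definition pair_compl S e f := (S :&: perp A e :&: perp A f)%MS.

(* A vector that is not orthogonal to all of S pairs nontrivially with some
   vector of S (decidable, as F^n is finite). *)
Lemma nonorth_witness S v : ~ (forall w, (w <= S)%MS -> bf v w = 0) ->
  exists w, (w <= S)%MS /\ bf v w != 0.
Proof.
move=> nonorth; have [|none] := boolP [exists w, (w <= S)%MS && (bf v w != 0)].
  by case/existsP=> w /andP[wS bw]; exists w.
case: nonorth => w wS; apply/eqP; apply: contraNT none => bw.
by apply/existsP; exists w; rewrite wS.
Qed.

(* A subspace of rank >= 3 contains a nonzero singular vector: take u <> 0,
   then a singular combination of u with a vector of S :&: u^perp outside <u>. *)
Lemma singular_exists S : (3 <= \rank S)%N ->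
  exists e, [/\ (e <= S)%MS, e != 0 & Q e = 0].
Proof.
move=> rS; have [u [uS u0]] := row_neq0 (ltnW (ltnW rS)).
have [Qu|Qu] := eqVneq (Q u) 0; first by exists u.
set T := (S :&: perp A u)%MS.
have rT : (2 <= \rank T)%N.
  by have := mxrank_cap_ker S (polar_mx A *m u^T); rewrite -/(perp A u) -/T; lia.
have /row_notsub[v [vT vu]] : ~~ (T <= u)%MS.
  by apply: contraTN rT => /mxrankS; rewrite rank_rV u0; lia.
have /andP[vS /perpP bvu] : (v <= S)%MS && (v <= perp A u)%MS by rewrite -sub_capmx.
have [l Ql] := singular_comb char2 Qu (etrans (bfC A u v) bvu).
exists (l *: u + v); split => //; first by rewrite addmx_sub ?scalemx_sub.
apply: contra vu => /eqP E; rewrite (_ : v = - (l *: u)) ?eqmx_opp ?scalemx_sub //.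
by apply/eqP; rewrite -addr_eq0 addrC E.
Qed.

Lemma hyperbolic_partner S e w : (e <= S)%MS -> Q e = 0 ->
  (w <= S)%MS -> bf e w != 0 -> exists f, [/\ (f <= S)%MS, Q f = 0 & bf e f = 1].
Proof.
move=> eS Qe wS bw; set f0 := (bf e w)^-1 *: w.
have b1 : bf e f0 = 1 by rewrite bfZr mulVf.
exists (f0 + Q f0 *: e); split; first by rewrite addmx_sub ?scalemx_sub.
  by rewrite qformD qformZ Qe mulr0 addr0 bfZr bfC b1 mulr1 addrr_pchar2.
by rewrite bfDr bfZr bfxx // mulr0 addr0.
Qed.

Lemma pair_split S e f : (e <= S)%MS -> (f <= S)%MS -> bf e f = 1 ->
  [/\ (pair_compl S e f <= S)%MS, (S <= pair_compl S e f + e + f)%MS,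
      (forall v, (v <= pair_compl S e f)%MS -> bf v e = 0 /\ bf v f = 0) &
      \rank S = (\rank (pair_compl S e f)).+2].
Proof.
move=> eS fS bef; set S' := pair_compl S e f.
have S'S : (S' <= S)%MS by rewrite /S' /pair_compl -capmxA capmxSl.
have orth v : (v <= S')%MS -> bf v e = 0 /\ bf v f = 0.
  by rewrite /S' /pair_compl !sub_capmx => /andP[/andP[_ /perpP ->] /perpP ->].
have bfe : bf f e = 1 by rewrite bfC.
have dec : (S <= S' + e + f)%MS.
  apply/row_subP => i; set s := row i S; have sS : (s <= S)%MS := row_sub i S.
  set s' := s - bf s f *: e - bf s e *: f.
  have -> : s = s' + bf s f *: e + bf s e *: f by rewrite /s' addrAC !subrK.
  apply: addmx_sub_adds; [apply: addmx_sub_adds|]; rewrite ?scalemx_sub //.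
  rewrite /S' /pair_compl !sub_capmx -andbA; apply/and3P; split.
  - by rewrite /s' !addmx_sub ?eqmx_opp ?scalemx_sub.
  - by apply/perpP; rewrite /s' !bfBl !bfZl bfxx // bfe mulr0 mulr1 subr0 subrr.
  - by apply/perpP; rewrite /s' !bfBl !bfZl bfxx // bef mulr0 mulr1 subr0 subrr.
have eS' : ~~ (e <= S')%MS.
  by apply/negP => /orth[_]; rewrite bef; apply/eqP; exact: oner_neq0.
have fS'e : ~~ (f <= S' + e)%MS.
  apply/negP => /sub_adds_rowP[a [c [aS E]]]; move: bfe.
  rewrite E bfDl bfZl bfxx // mulr0 addr0; case: (orth a aS) => -> _ /eqP.
  by rewrite eq_sym oner_eq0.
split => //; have defS : (S :=: S' + e + f)%MS.
  by apply/eqmxP; rewrite dec !addsmx_sub S'S eS fS.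
by rewrite defS !mxrank_adds_notsub.
Qed.

Lemma nondeg_pair_split S : nondeg_sub S -> (3 <= \rank S)%N ->
  exists e, exists f, [/\ [/\ Q e = 0, Q f = 0 & bf e f = 1],
    [/\ (pair_compl S e f <= S)%MS, (e <= S)%MS, (f <= S)%MS &
        (S <= pair_compl S e f + e + f)%MS],
    (forall v, (v <= pair_compl S e f)%MS -> bf v e = 0 /\ bf v f = 0),
    nondeg_sub (pair_compl S e f) &
    \rank S = (\rank (pair_compl S e f)).+2].
Proof.
move=> ndS rS; have [e [eS e0 Qe]] := singular_exists rS.
have [w [wS bw]] : exists w, (w <= S)%MS /\ bf e w != 0.
  by apply: nonorth_witness => orth_e; case/eqP: e0; apply: ndS.
have [f [fS Qf bef]] := hyperbolic_partner eS Qe wS bw.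
have [S'S dec orth rk] := pair_split eS fS bef.
exists e, f; split => // v vS' orth_v; apply: ndS; first exact: submx_trans vS' S'S.
have [ve vf] := orth v vS'.
by move=> u uS; apply: bf_adds2_eq0 (submx_trans uS dec).
Qed.

Lemma nondeg_rank_even S : nondeg_sub S -> ~~ odd (\rank S).
Proof.
elim: {S}(\rank S).+1 {-2}S (ltnSn (\rank S)) => // N IH S rS ndS.
have [r3|r3] := leqP 3 (\rank S).
  have [e [f [_ _ _ ndS' rk]]] := nondeg_pair_split ndS r3.
  by rewrite rk /= negbK; apply: IH ndS'; lia.
case: (ltnP (\rank S) 1) => [|r1]; first by case: (\rank S).
have [v [vS v0]] := row_neq0 r1.
have [w [wS bw]] : exists w, (w <= S)%MS /\ bf v w != 0.
  by apply: nonorth_witness => orth_v; case/eqP: v0; apply: ndS.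
have wv : ~~ (w <= v)%MS.
  by apply: contra bw => /sub_rVP[c ->]; rewrite bfZr bfxx // mulr0.
have : (\rank (v + w)%MS <= \rank S)%N by rewrite mxrankS // addsmx_sub vS wS.
rewrite mxrank_adds_notsub // rank_rV v0; lia.
Qed.

Lemma plane_span (D : 'M[F]_n) (u v : 'rV[F]_n) : \rank D = 2%N ->
  (u <= D)%MS -> (v <= D)%MS -> bf u v = 1 -> (D == u + v)%MS.
Proof.
move=> rD uD vD buv; have uvD : (u + v <= D)%MS by rewrite addsmx_sub uD vD.
have u0 : u != 0 by apply: contra_eq_neq buv => ->; rewrite bf0l eq_sym oner_neq0.
have vu : ~~ (v <= u)%MS.
  apply: contra_eqN buv => /sub_rVP[c ->]; rewrite bfZr bfxx // mulr0 eq_sym.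
  exact: oner_neq0.
by rewrite /= uvD andbT -(mxrank_leqif_sup uvD) mxrank_adds_notsub // rank_rV u0 rD.
Qed.

End HyperbolicPairs.

Section Planes.
Variables (F : finFieldType) (n : nat) (A : 'M[F]_n).
Hypothesis char2 : 2%N \in [pchar F].
Local Notation Q := (qform A).
Local Notation bf := (bf A).
Implicit Types (v w x y u e f r z : 'rV[F]_n) (W : 'M[F]_n).

Lemma shift_by_radical r z (a : F) : Q r != 0 -> (forall w, bf r w = 0) ->
  exists l : F, Q (z + l *: r) = a.
Proof.
move=> Qr rad; have [l Ql] := sqrt_pchar2 char2 ((a - Q z) / Q r).
by exists l; rewrite qformD qformZ Ql divfK // bfZr bfC rad mulr0 addr0 addrC subrK.
Qed.

(* If t^2 + t never takes the value c, the plane with Q(x) = 1, Q(y) = c is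
   anisotropic: Q(a x + b y) = b^2 ((a/b)^2 + a/b + c) for b <> 0. *)
Lemma anisotropic_plane x y (c : F) : (forall t : F, t ^+ 2 + t != c) ->
  Q x = 1 -> Q y = c -> bf x y = 1 ->
  forall v, (v <= x + y)%MS -> Q v = 0 -> v = 0.
Proof.
move=> AS Qx Qy bxy v /sub_plane_rowP[al [be ->]].
rewrite qformD !qformZ Qx Qy mulr1 bfZl bfZr bxy mulr1.
have [->|be0] := eqVneq be 0.
  rewrite scale0r addr0 expr0n /= mul0r mulr0 !addr0 => /eqP.
  by rewrite expf_eq0 /= => /eqP ->; rewrite scale0r.
move=> Qv; case/negP: (AS (al / be)); apply/eqP.
have : (al / be) ^+ 2 + al / be + c = (al ^+ 2 + be ^+ 2 * c + al * be) / be ^+ 2.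
  by field.
by rewrite Qv mul0r => /eqP; rewrite addr_eq0 oppr_pchar2 // => /eqP.
Qed.

Lemma witt_index_hyperbolic_plane W e f : Q e = 0 -> Q f = 0 -> bf e f = 1 ->
  (W == e + f)%MS -> witt_index A W = 1%N.
Proof.
move=> Qe Qf bef defW; rewrite (@witt_index_hyperbolic _ _ _ char2 _ 0 e f) //.
- by rewrite witt_index0.
- by move=> w; rewrite submx0 => /eqP ->; rewrite !bf0l.
- by move/eqmxP: defW => defW; apply/andP; split; rewrite ?defW; sub_sums.
Qed.

(* The orthogonal sum of two planes with symplectic bases (x, y), (u, v) on
   which Q takes the same values is hyperbolic of Witt index 2: it is spanned
   by the orthogonal hyperbolic pairs (x + u, y + Q(v)(x + u)) and
   (y + v, u + Q(u)(y + v)). *)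
Lemma mirror_witt_index W x y u v : bf x y = 1 -> bf u v = 1 ->
  Q x = Q u -> Q y = Q v ->
  bf x u = 0 -> bf x v = 0 -> bf y u = 0 -> bf y v = 0 ->
  (W == (x + y) + (u + v))%MS -> witt_index A W = 2%N.
Proof.
move=> bxy buv Qxu Qyv bxu bxv byu byv defW.
set e1 := x + u; set f1 := y + Q v *: e1; set e2 := y + v; set f2 := u + Q u *: e2.
have Qe1 : Q e1 = 0 by rewrite qformD Qxu bxu addr0 addrr_pchar2.
have Qe2 : Q e2 = 0 by rewrite qformD Qyv byv addr0 addrr_pchar2.
have bye1 : bf y e1 = 1 by rewrite bfDr bfC bxy byu addr0.
have bue2 : bf u e2 = 1 by rewrite bfDr bfC byu buv add0r.
have Qf1 : Q f1 = 0.
  by rewrite qformD qformZ Qyv Qe1 bfZr bye1 mulr0 addr0 mulr1 addrr_pchar2.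
have Qf2 : Q f2 = 0.
  by rewrite qformD qformZ Qe2 bfZr bue2 mulr0 addr0 mulr1 addrr_pchar2.
have be1f1 : bf e1 f1 = 1.
  by rewrite bfDr bfZr bfxx // mulr0 addr0 bfDl bxy (bfC A u) byu addr0.
have be2f2 : bf e2 f2 = 1.
  by rewrite bfDr bfZr bfxx // mulr0 addr0 bfDl byu (bfC A v) buv add0r.
have be2e1 : bf e2 e1 = 0.
  rewrite !bfDl !bfDr (bfC A y x) bxy byu (bfC A v x) bxv (bfC A v u) buv.
  by rewrite addr0 add0r addrr_pchar2.
have be2f1 : bf e2 f1 = 0.
  by rewrite bfDr bfZr be2e1 mulr0 addr0 bfDl bfxx // (bfC A v y) byv addr0.
have bf2e1 : bf f2 e1 = 0.
  by rewrite bfDl bfZl be2e1 mulr0 addr0 bfDr bfC bxu bfxx // addr0.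
have bf2f1 : bf f2 f1 = 0.
  rewrite bfDr bfZr bf2e1 mulr0 addr0 bfDl bfZl (bfC A u y) byu add0r.
  by rewrite bfDl bfxx // (bfC A v y) byv addr0 mulr0.
have xyuv_span : ((x + y) + (u + v) == (e2 + f2) + e1 + f1)%MS.
  have sub_diff a b : (a <= (e2 + f2) + e1 + f1)%MS ->
      (b <= (e2 + f2) + e1 + f1)%MS -> (a - b <= (e2 + f2) + e1 + f1)%MS.
    by move=> aS bS; rewrite addmx_sub ?eqmx_opp.
  have uS : (u <= (e2 + f2) + e1 + f1)%MS.
    have -> : u = f2 - Q u *: e2 by rewrite /f2 addrK.
    by rewrite sub_diff ?scalemx_sub //; sub_sums.
  have yS : (y <= (e2 + f2) + e1 + f1)%MS.
    have -> : y = f1 - Q v *: e1 by rewrite /f1 addrK.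
    by rewrite sub_diff ?scalemx_sub //; sub_sums.
  have xS : (x <= (e2 + f2) + e1 + f1)%MS.
    have -> : x = e1 - u by rewrite /e1 addrK.
    by rewrite sub_diff //; sub_sums.
  have vS : (v <= (e2 + f2) + e1 + f1)%MS.
    have -> : v = e2 - y by rewrite /e2 addrAC subrr add0r.
    by rewrite sub_diff //; sub_sums.
  apply/andP; split; first by sub_sums.
  by rewrite !addsmx_sub !addmx_sub ?scalemx_sub ?addmx_sub //; sub_sums.
rewrite (@witt_index_hyperbolic _ _ _ char2 _ (e2 + f2)%MS e1 f1) //.
- by rewrite (witt_index_hyperbolic_plane Qe2 Qf2 be2f2) //; apply/eqmxP.
- move=> z /sub_plane_rowP[a [b ->]]; rewrite !bfDl !bfZl be2e1 be2f1 bf2e1 bf2f1.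
  by rewrite !mulr0 addr0.
- by apply/eqmxP; apply: eqmx_trans (eqmxP defW) (eqmxP xyuv_span).
Qed.

End Planes.

Section Complements.
Variables (F : finFieldType) (n : nat) (A : 'M[F]_n).
Hypothesis char2 : 2%N \in [pchar F].
Variable r : 'rV[F]_n.
Hypotheses (Qr : qform A r != 0) (rad : forall w, bf A r w = 0).
Local Notation Q := (qform A).
Local Notation bf := (bf A).
Implicit Types (v w x y u e f : 'rV[F]_n) (C D X : 'M[F]_n).

Definition complement_of C X := [/\ (X <= C)%MS, ~~ (r <= X)%MS & (C <= X + r)%MS].

Definition good_complement C D k :=
  exists2 X, complement_of C X & witt_index A (X + D)%MS = k.

(* The configuration of the fixed space C and the image D of the isometry:
   r lies in C, C is orthogonal to D, the radical of b on C lies in <r>, and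
   b is nondegenerate on D. *)
Definition admissible C D := [/\ (r <= C)%MS,
  forall c d, (c <= C)%MS -> (d <= D)%MS -> bf c d = 0,
  forall c, (c <= C)%MS -> (forall c', (c' <= C)%MS -> bf c c' = 0) -> (c <= r)%MS
  & nondeg_sub A D].

Lemma r_neq0 : r != 0.
Proof. by apply: contraNneq Qr => ->; rewrite qform0. Qed.

(* r is orthogonal to everything, so it lies in any pair complement. *)
Lemma r_pair_compl C e f : (r <= C)%MS -> (r <= pair_compl A C e f)%MS.
Proof. by move=> rC; rewrite /pair_compl !sub_capmx rC /=; apply/andP; split; apply/perpP. Qed.

Lemma good_complement_adds_pair C C' D e f k :
  Q e = 0 -> Q f = 0 -> bf e f = 1 ->
  (C' <= C)%MS -> (e <= C)%MS -> (f <= C)%MS -> (C <= C' + e + f)%MS ->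
  (forall v, (v <= C')%MS -> bf v e = 0 /\ bf v f = 0) ->
  (forall c d, (c <= C)%MS -> (d <= D)%MS -> bf c d = 0) ->
  good_complement C' D k -> good_complement C D k.+1.
Proof.
move=> Qe Qf bef C'C eC fC CC' orth CD [X' [X'C' rX' C'X'] wX'].
have X'C := submx_trans X'C' C'C.
exists (X' + e + f)%MS; first split.
- by rewrite !addsmx_sub X'C eC fC.
- apply/negP => /sub_adds2_rowP[a [al [be [aX E]]]].
  have [ae af] := orth a (submx_trans aX X'C').
  have := congr1 (bf^~ e) E; have := congr1 (bf^~ f) E.
  rewrite !bfDl !bfZl !bfxx // bef (bfC A f e) bef ae af !rad !mulr0 !mulr1 !add0r !addr0.
  move=> be0 al0; move: E; rewrite -be0 -al0 !scale0r !addr0 => E.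
  by case/negP: rX'; rewrite E.
- apply: submx_trans CC' _; rewrite !addsmx_sub -andbA; apply/and3P; split; try sub_sums.
  by apply: submx_trans C'X' _; sub_sums.
rewrite (@witt_index_hyperbolic _ _ _ char2 _ (X' + D)%MS e f) ?wX' //.
- move=> z /sub_addsmxP[[u1 u2] /= ->]; rewrite !bfDl.
  have [h1 h2] := orth _ (submx_trans (submxMl u1 X') X'C').
  by rewrite h1 h2 (bfC A _ e) (bfC A _ f) !CD ?submxMl ?addr0.
- by apply/andP; split; sub_sums.
Qed.

Lemma good_complement_adds_pair_image C D D' e f k :
  Q e = 0 -> Q f = 0 -> bf e f = 1 ->
  (D' <= D)%MS -> (e <= D)%MS -> (f <= D)%MS -> (D <= D' + e + f)%MS ->
  (forall v, (v <= D')%MS -> bf v e = 0 /\ bf v f = 0) ->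
  (forall c d, (c <= C)%MS -> (d <= D)%MS -> bf c d = 0) ->
  good_complement C D' k -> good_complement C D k.+1.
Proof.
move=> Qe Qf bef D'D eD fD DD' orth CD [X [XC rX CX] wX].
exists X => //; rewrite (@witt_index_hyperbolic _ _ _ char2 _ (X + D')%MS e f) ?wX //.
- move=> z /sub_addsmxP[[u1 u2] /= ->]; rewrite !bfDl.
  have [h1 h2] := orth _ (submxMl u2 D').
  by rewrite h1 h2 !CD ?(submx_trans (submxMl _ _) XC) ?addr0.
- apply/andP; split; last by sub_sums.
  rewrite addsmx_sub; apply/andP; split; first by sub_sums.
  by apply: submx_trans DD' _; sub_sums.
Qed.

Lemma split_fixed_part C D : admissible C D -> (4 <= \rank C)%N ->
  exists C', [/\ admissible C' D, \rank C = (\rank C').+2 &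
    forall k, good_complement C' D k -> good_complement C D k.+1].
Proof.
move=> [rC CD radC ndD] rC4.
have [e [eC e0 Qe]] := singular_exists A char2 (ltnW rC4).
have [w [wC bw]] : exists w, (w <= C)%MS /\ bf e w != 0.
  apply: nonorth_witness => orth_e; case/negP: e0; have /sub_rVP[c Ee] := radC e eC orth_e.
  move: Qe; rewrite Ee qformZ => /eqP; rewrite mulf_eq0 (negbTE Qr) orbF expf_eq0 /=.
  by move=> /eqP ->; rewrite scale0r.
have [f [fC Qf bef]] := hyperbolic_partner char2 eC Qe wC bw.
have [C'C dec orth rk] := pair_split char2 eC fC bef.
exists (pair_compl A C e f); split => //; last first.
  by move=> k; apply: (good_complement_adds_pair Qe Qf bef C'C eC fC dec orth CD).
split; first exact: r_pair_compl.
- by move=> c d cC' dD; apply: CD (submx_trans cC' C'C) dD.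
- move=> c cC' orth_c; apply: radC (submx_trans cC' C'C) _ => c' /submx_trans/(_ dec).
  by have [ce cf] := orth c cC'; apply: bf_adds2_eq0.
- exact: ndD.
Qed.

Lemma split_image_part C D : admissible C D -> (3 <= \rank D)%N ->
  exists D', [/\ admissible C D', \rank D = (\rank D').+2 &
    forall k, good_complement C D' k -> good_complement C D k.+1].
Proof.
move=> [rC CD radC ndD] rD3.
have [e [f [[Qe Qf bef] [D'D eD fD dec] orth ndD' rk]]] := nondeg_pair_split char2 ndD rD3.
exists (pair_compl A D e f); split => //; last first.
  by move=> k; apply: (good_complement_adds_pair_image Qe Qf bef D'D eD fD dec orth CD).
split => // c d cC dD'; exact: CD cC (submx_trans dD' D'D).
Qed.

Lemma symplectic_basis_mod_r C D : admissible C D -> \rank C = 3%N ->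
  exists c, exists y, [/\ (c <= C)%MS, (y <= C)%MS, bf c y = 1 & (C <= (c + y) + r)%MS].
Proof.
move=> [rC _ radC _] rC3; have rr : \rank r = 1%N by rewrite rank_rV r_neq0.
have /row_notsub[c [cC cr]] : ~~ (C <= r)%MS by apply/negP => /mxrankS; rewrite rr rC3.
have [w [wC bw]] : exists w, (w <= C)%MS /\ bf c w != 0.
  by apply: nonorth_witness => orth_c; case/negP: cr; apply: radC.
set y := (bf c w)^-1 *: w; have bcy : bf c y = 1 by rewrite bfZr mulVf.
have yC : (y <= C)%MS by rewrite scalemx_sub.
have [C''C dec _ rk] := pair_split char2 cC yC bcy.
have rC'' := r_pair_compl c y rC.
have C''r : (pair_compl A C c y <= r)%MS.
  rewrite -(mxrank_leqif_sup rC''); apply/eqP; apply: anti_leq.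
  by have := mxrankS rC''; rewrite rr; lia.
exists c, y; split => //; apply: submx_trans dec _.
by sub_sums.
Qed.

(* For rank C = 3, any values a, b of Q on a symplectic basis of a
   complement of <r> can be prescribed, by shifting along r. *)
Lemma plane_complement C D : admissible C D -> \rank C = 3%N -> forall a b : F,
  exists x, exists y, [/\ Q x = a, Q y = b, bf x y = 1 & complement_of C (x + y)%MS].
Proof.
move=> admCD rC3 a b; have [rC _ _ _] := admCD.
have [c [y [cC yC bcy CS]]] := symplectic_basis_mod_r admCD rC3.
have [p Qx] := shift_by_radical char2 c a Qr rad.
have [q Qy] := shift_by_radical char2 y b Qr rad.
set x := c + p *: r; set y' := y + q *: r.
have bxy : bf x y' = 1.
  by rewrite !bfDl !bfDr !bfZl !bfZr !rad (bfC A c r) rad bcy !mulr0 !addr0.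
exists x, y'; split => //; split.
- by rewrite addsmx_sub !addmx_sub ?scalemx_sub.
- apply/negP => /sub_plane_rowP[al [be E]].
  have al0 : al = 0.
    by have := congr1 (bf^~ y') E; rewrite /= rad bfDl !bfZl bxy bfxx // mulr0 addr0 mulr1.
  have be0 : be = 0.
    by have := congr1 (bf^~ x) E; rewrite /= rad bfDl !bfZl bfC bxy bfxx // mulr0 add0r mulr1.
  by move: r_neq0; rewrite E al0 be0 !scale0r addr0 eqxx.
- have sub_shift (z : 'rV[F]_n) (l : F) :
      ((z + l *: r)%R <= x + y' + r)%MS -> (z <= x + y' + r)%MS.
    by move=> zS; rewrite -[z](addrK (l *: r) z) addmx_sub ?eqmx_opp ?scalemx_sub ?addsmxSr.
  apply: submx_trans CS _; rewrite !addsmx_sub addsmxSr andbT.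
  by rewrite (sub_shift c p) ?(sub_shift y q) // -/x -/y'; sub_sums.
Qed.

(* Base case D = 0: a hyperbolic plane X has Witt index 1, and an
   anisotropic one (Q = 1, c on a symplectic basis, with c outside the image
   of t |-> t^2 + t) has Witt index 0. *)
Lemma good_complement_no_image C D : admissible C D -> \rank C = 3%N ->
  D = 0 -> good_complement C D 1 /\ good_complement C D 0.
Proof.
move=> admCD rC3 ->; have [c0 AS] := artin_schreier_nonsurj char2.
split.
  have [x [y [Qx Qy bxy cXC]]] := plane_complement admCD rC3 0 0.
  exists (x + y)%MS => //; apply: (witt_index_hyperbolic_plane char2 Qx Qy bxy).
  by apply/andP; split; sub_sums.
have [x [y [Qx Qy bxy cXC]]] := plane_complement admCD rC3 1 c0.
exists (x + y)%MS => //; apply: witt_index_anisotropic => v vS.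
by apply: (anisotropic_plane char2 AS Qx Qy bxy); rewrite (submx_trans vS) //; sub_sums.
Qed.

(* Base case rank D = 2, Witt index 2: take X a mirror image of D. *)
Lemma good_complement_mirror C D : admissible C D -> \rank C = 3%N ->
  \rank D = 2%N -> good_complement C D 2.
Proof.
move=> admCD rC3 rD2; have [_ CD _ ndD] := admCD.
have [u [uD u0]] : exists u, (u <= D)%MS /\ u != 0 by apply: row_neq0; rewrite rD2.
have [w [wD bw]] : exists w, (w <= D)%MS /\ bf u w != 0.
  by apply: nonorth_witness => orth_u; case/eqP: u0; apply: ndD.
set v := (bf u w)^-1 *: w; have buv : bf u v = 1 by rewrite bfZr mulVf.
have vD : (v <= D)%MS by rewrite scalemx_sub.
have [x [y [Qx Qy bxy [XC rX CX]]]] := plane_complement admCD rC3 (Q u) (Q v).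
have [xC yC] : (x <= C)%MS /\ (y <= C)%MS by split; apply: submx_trans XC; sub_sums.
exists (x + y)%MS => //; apply: (mirror_witt_index char2 bxy buv Qx Qy); rewrite ?CD //.
by have /andP[Duv _] := plane_span char2 rD2 uD vD buv; apply/andP; split; sub_sums.
Qed.

(* Base case rank D = 2, Witt index 1: if D contains a nonzero singular
   vector it is a hyperbolic plane and X is taken anisotropic; otherwise D is
   anisotropic and X is taken hyperbolic. *)
Lemma good_complement_plane_index1 C D : admissible C D -> \rank C = 3%N ->
  \rank D = 2%N -> good_complement C D 1.
Proof.
move=> admCD rC3 rD2; have [_ CD _ ndD] := admCD.
have [c0 AS] := artin_schreier_nonsurj char2.
have [|aniso] := boolP [exists e, [&& (e <= D)%MS, e != 0 & Q e == 0]].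
  case/existsP=> e /and3P[eD e0 /eqP Qe].
  have [w [wD bw]] : exists w, (w <= D)%MS /\ bf e w != 0.
    by apply: nonorth_witness => orth_e; case/eqP: e0; apply: ndD.
  have [f [fD Qf bef]] := hyperbolic_partner char2 eD Qe wD bw.
  have /andP[Def _] := plane_span char2 rD2 eD fD bef.
  have [x [y [Qx Qy bxy [XC rX CX]]]] := plane_complement admCD rC3 1 c0.
  exists (x + y)%MS => //.
  rewrite (@witt_index_hyperbolic _ _ _ char2 _ (x + y)%MS e f) //.
  - by rewrite witt_index_anisotropic // => z; apply: (anisotropic_plane char2 AS Qx Qy bxy).
  - by move=> z zS; rewrite !CD ?(submx_trans zS XC).
  - apply/andP; split; last by sub_sums.
    by rewrite addsmx_sub; apply/andP; split; [|apply: submx_trans Def _]; sub_sums.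
have [x [y [Qx Qy bxy [XC rX CX]]]] := plane_complement admCD rC3 0 0.
have [xC yC] : (x <= C)%MS /\ (y <= C)%MS by split; apply: submx_trans XC; sub_sums.
exists (x + y)%MS => //; rewrite (@witt_index_hyperbolic _ _ _ char2 _ D x y) //.
- rewrite witt_index_anisotropic // => z zD Qz; apply/eqP; apply: contraNT aniso => z0.
  by apply/existsP; exists z; rewrite zD z0 Qz eqxx.
- by move=> z zD; rewrite !(bfC A z) !CD.
- by apply/andP; split; sub_sums.
Qed.

(* Main induction: for rank C + rank D = 2k + 1, a complement of <r> in C
   gives X + D either Witt index k or k - 1 (dl = false or true). *)
Lemma good_complement_exists N C D k (dl : bool) :
  (\rank C + \rank D <= N)%N -> admissible C D -> (2 <= \rank C)%N ->
  (\rank C + \rank D)%N = k.*2.+1 -> good_complement C D (k - dl).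
Proof.
elim: N C D k => [|N IH] C D k hN admCD rC2 hk; first lia.
have [rC4|rC4] := leqP 4 (\rank C).
  have [C' [admC' rk step]] := split_fixed_part admCD rC4.
  rewrite (_ : k - dl = (k.-1 - dl).+1)%N; last by case: (dl); lia.
  by apply/step/IH; rewrite // -?rk; lia.
have [rD3|rD3] := leqP 3 (\rank D).
  have [D' [admCD' rk step]] := split_image_part admCD rD3.
  rewrite (_ : k - dl = (k.-1 - dl).+1)%N; last by case: (dl); lia.
  by apply/step/IH; rewrite // -?rk; lia.
have [_ _ _ ndD] := admCD; have evenD := nondeg_rank_even char2 ndD.
have [rD0|rD2] : \rank D = 0%N \/ \rank D = 2%N.
  by move: evenD rD3; case: (\rank D) => [|[|[|]]] //; auto.
  have rC3 : \rank C = 3%N by lia.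
  have D0 : D = 0 by apply/eqP; rewrite -mxrank_eq0 rD0.
  have [plus minus] := good_complement_no_image admCD rC3 D0.
  by rewrite (_ : k = 1%N); [case: (dl) | lia].
have rC3 : \rank C = 3%N by lia.
rewrite (_ : k = 2%N); last by lia.
by case: (dl); [apply: good_complement_plane_index1 | apply: good_complement_mirror].
Qed.

End Complements.

(* For a semisimple matrix g, ker (g - 1)^2 = ker (g - 1): the minimal
   polynomial p of g is separable, so 'X - 1 is coprime to p / ('X - 1) when
   it divides p, and coprime to p otherwise; a Bezout identity then kills
   Y (g - 1) whenever Y (g - 1)^2 = 0. *)
Section Semisimple.
Variables (F : finFieldType) (n : nat) (g : 'M[F]_n.+1).
Hypothesis ss : semisimple_mx g.
Local Notation hg := (horner_mx g).

Lemma horner_mxM (a b : {poly F}) : hg (a * b) = hg a *m hg b.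
Proof. exact: rmorphM. Qed.

Lemma horner_mx1 : hg 1 = 1%:M.
Proof. by rewrite -(horner_mx_C g). Qed.

Lemma horner_mx_comm (a b : {poly F}) : hg a *m hg b = hg b *m hg a.
Proof. by rewrite -!horner_mxM mulrC. Qed.

Lemma semisimple_ker_sqr k (Y : 'M[F]_(k, n.+1)) :
  Y *m (g - 1%:M) *m (g - 1%:M) = 0 -> Y *m (g - 1%:M) = 0.
Proof.
have hgU : hg ('X - 1%:P) = g - 1%:M by rewrite rmorphB /= horner_mx_X horner_mx_C.
rewrite -hgU; set U := hg _ => YUU.
set p := mxminpoly g; have p0 : hg p = 0 := mx_root_minpoly g.
(* From a ('X - 1) + b h = 1 it suffices to show Y U b(g) h(g) = 0. *)
have bezout (a b h : {poly F}) : a * ('X - 1%:P) + b * h = 1 ->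
    Y *m U *m hg b *m hg h = 0 -> Y *m U = 0.
  move=> E YUbh; have := congr1 (fun q => Y *m U *m hg q) E.
  rewrite /= horner_mx1 mulmx1 => <-; rewrite rmorphD /= !horner_mxM mulmxDr !mulmxA YUbh addr0.
  by rewrite -!mulmxA [hg a *m U]horner_mx_comm !mulmxA YUU !mul0mx.
have [r1|nr1] := boolP (root p 1).
  set h := p %/ ('X - 1%:P).
  have ph : p = h * ('X - 1%:P) by rewrite divpK // dvdp_XsubCl.
  have /Bezout_eq1_coprimepP[[a b] /= E] : coprimep ('X - 1%:P) h.
    by apply: (separable_coprime ss); rewrite mulrC -ph dvdpp.
  apply: (bezout a b h E); rewrite -!mulmxA [U *m _]mulmxA [U *m hg b]horner_mx_comm.
  by rewrite -mulmxA [U *m hg h]horner_mx_comm -horner_mxM -ph p0 !mulmx0.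
have /Bezout_eq1_coprimepP[[b a] /= E] : coprimep p ('X - 1%:P) by rewrite coprimep_XsubC.
by apply: (bezout a b p); rewrite 1?addrC // p0 mulmx0.
Qed.

End Semisimple.

Section NonsingularRadical.
Variables (F : finFieldType) (n : nat) (A : 'M[F]_n).
Hypotheses (char2 : 2%N \in [pchar F]) (ns : nonsingular_qf A).
Local Notation Q := (qform A).

Lemma radical_line : odd n ->
  exists r, [/\ (r <= radical A)%MS, Q r != 0 & (radical A <= r)%MS].
Proof.
move=> odd_n; have : (0 < \rank (radical A))%N.
  rewrite lt0n mxrank_eq0; apply: contraTneq odd_n => R0.
  have nd1 : nondeg_sub A 1%:M.
    move=> v _ orth_v; apply/eqP; rewrite -submx0 -R0; apply/radicalP => w.
    exact/orth_v/submx1.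
  by have := nondeg_rank_even char2 nd1; rewrite mxrank1.
case/row_neq0=> r [rR r0].
have Qr : Q r != 0 by apply: contra r0 => /eqP Qr0; apply/eqP/ns.
exists r; split => //; apply: contraT => /row_notsub[v [vR vr]].
have bvr : bf A r v = 0 by move/radicalP: rR.
have [l Ql] := singular_comb char2 Qr bvr.
have lrvR : ((l *: r + v)%R <= radical A)%MS by rewrite addmx_sub ?scalemx_sub.
case/negP: vr; rewrite (_ : v = - (l *: r)) ?eqmx_opp ?scalemx_sub //.
by apply/eqP; rewrite -addr_eq0 addrC (ns lrvR Ql).
Qed.

End NonsingularRadical.

Section FixedImage.
Variables (F : finFieldType) (n : nat) (A g : 'M[F]_n.+1).
Hypotheses (char2 : 2%N \in [pchar F]) (gU : g \in unitmx).
Hypotheses (gQ : forall v, qform A (v *m g) = qform A v) (ss : semisimple_mx g).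
Variable r : 'rV[F]_n.+1.
Hypotheses (Qr : qform A r != 0) (rR : (r <= radical A)%MS) (Rr : (radical A <= r)%MS).
Local Notation Q := (qform A).
Local Notation bf := (bf A).
Local Notation C := (fixed_space g).
Local Notation D := (g - 1%:M).
Implicit Types (u v w c d : 'rV[F]_n.+1).

Lemma isometry_bf u v : bf (u *m g) (v *m g) = bf u v.
Proof.
have := qformD A (u *m g) (v *m g).
by rewrite -mulmxDl !gQ qformD => /addrI.
Qed.

Lemma fixedP k (M : 'M[F]_(k, n.+1)) : (M <= C)%MS -> M *m g = M.
Proof. by move/sub_kermxP; rewrite mulmxBr mulmx1 => /eqP; rewrite subr_eq0 => /eqP. Qed.

(* g maps the radical line to itself preserving Q(r) <> 0, so it fixes r. *)
Lemma isometry_fixes_radical : r *m g = r.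
Proof.
have rgR : (r *m g <= radical A)%MS.
  by apply/radicalP => w; rewrite -[w](mulmxKV gU) isometry_bf; move/radicalP: rR.
have /sub_rVP[c rg] := submx_trans rgR Rr.
have c1 : c ^+ 2 = 1 ^+ 2.
  have := gQ r; rewrite rg qformZ expr1n => /eqP.
  rewrite -subr_eq0 -{2}[Q r]mul1r -mulrBl mulf_eq0 (negbTE Qr) orbF subr_eq0.
  by move/eqP.
by rewrite rg (sqr_inj_pchar2 char2 c1) scale1r.
Qed.

Lemma radical_fixed : (r <= C)%MS.
Proof. by apply/sub_kermxP; rewrite mulmxBr mulmx1 isometry_fixes_radical subrr. Qed.

Lemma fixed_image_orth c d : (c <= C)%MS -> (d <= D)%MS -> bf c d = 0.
Proof.
move=> cC /submxP[y ->]; rewrite mulmxBr mulmx1 bfC bfBl -(fixedP cC).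
by rewrite isometry_bf (fixedP cC) subrr.
Qed.

Lemma fixed_image_cap v : (v <= C)%MS -> (v <= D)%MS -> v = 0.
Proof.
by move=> /sub_kermxP vC /submxP[y Ey]; rewrite Ey; apply: (semisimple_ker_sqr ss); rewrite -Ey.
Qed.

Lemma fixed_image_full : (1%:M <= C + D)%MS.
Proof.
rewrite sub1mx /row_full; apply/eqP; have := mxrank_sum_cap C D.
have -> : \rank (C :&: D)%MS = 0%N.
  apply/eqP; rewrite mxrank_eq0 -submx0; apply/row_subP => i.
  have /andP[iC iD] : (row i (C :&: D) <= C)%MS && (row i (C :&: D) <= D)%MS.
    by rewrite -sub_capmx row_sub.
  by rewrite (fixed_image_cap iC iD) sub0mx.
rewrite /fixed_space mxrank_ker; have := rank_leq_row D; lia.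
Qed.

(* A vector orthogonal to C and D is in the radical, hence a multiple of r. *)
Lemma orth_fixed_image v : (forall c, (c <= C)%MS -> bf v c = 0) ->
  (forall d, (d <= D)%MS -> bf v d = 0) -> (v <= r)%MS.
Proof.
move=> vC vD; apply: submx_trans Rr; apply/radicalP => w.
have /sub_addsmxP[[u1 u2] /= ->] := submx_trans (submx1 w) fixed_image_full.
by rewrite bfDr vC ?vD ?submxMl // addr0.
Qed.

Lemma fixed_image_admissible : admissible A r C D.
Proof.
have rC := radical_fixed; split => //; first exact: fixed_image_orth.
  by move=> c cC orth_c; apply: (orth_fixed_image orth_c) => d; apply: fixed_image_orth.
move=> d dD orth_d; apply: (fixed_image_cap _ dD); apply: submx_trans rC.
by apply: (orth_fixed_image _ orth_d) => c cC; rewrite bfC fixed_image_orth.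
Qed.

Lemma complement_hyperplane X : complement_of r C X ->
  nondeg_hyperplane A (X + D)%MS /\ stablemx (X + D)%MS g.
Proof.
move=> [XC rX CX]; split; last first.
  rewrite addsmxMr (fixedP XC) addsmxS // mulmxBl mul1mx.
  by rewrite (_ : g *m g - g = g *m D) ?submxMl // mulmxBr mulmx1.
split; apply/andP; split; rewrite ?sub0mx ?submx1 //.
  apply/row_subP => i; set z := row i _.
  have /andP[zXD /(submx_trans)/(_ Rr)/sub_rVP[c Ez]] : (z <= X + D)%MS && (z <= radical A)%MS.
    by rewrite -sub_capmx row_sub.
  rewrite submx0 Ez; have [->|c0] := eqVneq c 0; first by rewrite scale0r.
  case/negP: rX; have /sub_addsmxP[[u1 u2] /= Er] : (r <= X + D)%MS.
    by rewrite -(scalerK c0 r) -Ez scalemx_sub.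
  suff D0 : u2 *m D = 0 by rewrite Er D0 addr0 submxMl.
  apply: fixed_image_cap; last exact: submxMl.
  rewrite (_ : u2 *m D = r - u1 *m X); last by rewrite Er addrAC subrr add0r.
  by rewrite addmx_sub ?eqmx_opp ?radical_fixed ?(submx_trans (submxMl _ _) XC).
apply: submx_trans fixed_image_full _; rewrite addsmx_sub; apply/andP; split.
  by apply: submx_trans CX _; apply: addsmxS => //; exact: addsmxSl.
by apply: submx_addsl; exact: addsmxSr.
Qed.

End FixedImage.

Unset Implicit Arguments.
Set Strict Implicit.
Theorem mainTheorem18 (F : finFieldType) (m : nat)
    (A : 'M[F]_(m.*2.+1)) (g : 'M[F]_(m.*2.+1)) :
  (2%N \in [pchar F]) ->
  nonsingular_qf A ->
  isometry_qf A g ->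
  semisimple_mx g ->
  (2 <= \rank (fixed_space g))%N ->
  (exists W : 'M[F]_(m.*2.+1),
      [/\ nondeg_hyperplane A W, stablemx W g & witt_index A W = m]) /\
  (exists W : 'M[F]_(m.*2.+1),
      [/\ nondeg_hyperplane A W, stablemx W g & witt_index A W = m.-1]).
Proof.
move=> char2 ns [gU gQ] ss rC2.
have odd_dim : odd m.*2.+1 by rewrite /= odd_double.
have [r [rR Qr Rr]] := radical_line char2 ns odd_dim.
have rad : forall w, bf A r w = 0 by apply/radicalP.
have admCD : admissible A r (fixed_space g) (g - 1%:M) by apply: fixed_image_admissible.
have rkCD : (\rank (fixed_space g) + \rank (g - 1%:M)%R)%N = m.*2.+1.
  by rewrite mxrank_ker; have := rank_leq_row (g - 1%:M); lia.
have hyperplane (dl : bool) : exists W : 'M[F]_(m.*2.+1),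
    [/\ nondeg_hyperplane A W, stablemx W g & witt_index A W = (m - dl)%N].
  have [X cX wX] := good_complement_exists char2 Qr rad dl (leqnn _) admCD rC2 rkCD.
  exists (X + (g - 1%:M))%MS; split => //; by have [] := complement_hyperplane char2 gU gQ ss Qr rR Rr cX.
by split; [have := hyperplane false | have := hyperplane true]; rewrite ?subn0 ?subn1.
Qed.
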